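(* Consider the complex polynomial optimization problem $\inf\{f : g_j\ge0,\ j\in[m]\}$ with $\mathscr A=\mathrm{supp}(f)\cup\bigcup_{j=1}^m\mathrm{supp}(g_j)$, and let $\mathbf r\in\{0,1\}^n$ be any sign symmetry of $\mathscr A$. Assume the chordal extension rule used to define $G^{(k)}_{d,l,j}=\overline{F^{(k)}_{d,l,j}}$ only adds edges between nodes lying in the same connected component of $F^{(k)}_{d,l,j}$. Let $d\ge d_{\min}$ and $k\ge1$. Then for every $l\in[p]$, every $j\in J_l$ and all $\beta,\gamma\in\mathbb N^{n_l}_{d-d_j}$ with $\{\beta,\gamma\}\in E(G^{(k)}_{d,l,j})$, one has $\mathbf r^T(\beta+\gamma)\equiv0\pmod2$.
   Context: Notation: $[n]=\{1,\dots,n\}$; $\mathbb N^n_t=\{\alpha\in\mathbb N^n:\sum_i\alpha_i\le t\}$. Let $\mathbf z=(z_1,\dots,z_n)$ be complex variables and $\bar{\mathbf z}$ their conjugates. A polynomial $p\in\mathbb C[\mathbf z,\bar{\mathbf z}]$ is written $p=\sum_{(\beta,\gamma)}p_{\beta,\gamma}\mathbf z^\beta\bar{\mathbf z}^\gamma$; its support is $\mathrm{supp}(p)=\{(\beta,\gamma)\in\mathbb N^n\times\mathbb N^n:p_{\beta,\gamma}\neq0\}$ and $\deg p=\max\{|\beta|+|\gamma|:(\beta,\gamma)\in\mathrm{supp}(p)\}$. $p$ is Hermitian if $p_{\beta,\gamma}=\overline{p_{\gamma,\beta}}$. For $(\beta,\gamma)\in\mathbb N^n\times\mathbb N^n$ and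 $\mathscr B\subseteq\mathbb N^n\times\mathbb N^n$, $(\beta,\gamma)+\mathscr B=\{(\beta+\beta',\gamma+\gamma'):(\beta',\gamma')\in\mathscr B\}$. The problem has Hermitian $f,g_1,\dots,g_m$; $d_j=\lceil\deg g_j/2\rceil$, $d_0=0$, $g_0=1$, $d_{\min}=\max\{\lceil\deg f/2\rceil,d_1,\dots,d_m\}$. Sign symmetries: a sign symmetry of $\mathscr A\subseteq\mathbb N^n\times\mathbb N^n$ is a vector $\mathbf r\in\{0,1\}^n$ such that $\mathbf r^T(\beta+\gamma)\equiv0\pmod 2$ for all $(\beta,\gamma)\in\mathscr A$. Graphs: undirected, simple. A chordal extension $\overline G$ of $G$ is a chordal graph on the same nodes containing $G$; a fixed rule $G\mapsto\overline G$ is used, satisfying $G\subseteq H\Rightarrow\overline G\subseteq\overline H$. Correlative sparsity: fix $d\ge d_{\min}$ and let $J'=\{j\in[m]:d_j=d\}$. For $\alpha\in\mathbb N^n$ let $\mathrm{supp}(\alpha)=\{i:\alpha_i\ne0\}$, and $\mathrm{var}(p)=\bigcup_{(\beta,\gamma)\in\mathrm{supp}(p)}(\mathrm{supp}(\beta)\cup\mathrm{supp}(\gamma))$. The csp graph $G^{\mathrm{csp}}$ has nodes $[n]$ and an edge $\{i,i'\}$ ($i\neq i'$) iff either (i) some $(\beta,\gamma)\in\mathrm{supp}(f)\cup\bigcup_{j\in J'}\mathrm{supp}(g_j)$ has $\{i,i'\}\subseteq\mathrm{supp}(\beta)\cup\mathrm{supp}(\gamma)$, or (ii) some $j\in[m]\setminus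 J'$ has $\{i,i'\}\subseteq\mathrm{var}(g_j)$. Let $I_1,\dots,I_p$ be the maximal cliques of a chordal extension of $G^{\mathrm{csp}}$, $n_l=|I_l|$, and let $J_1,\dots,J_p$ be pairwise disjoint with union $[m]\setminus J'$ and $\mathrm{var}(g_j)\subseteq I_l$ for $j\in J_l$. Correlative-term sparsity graphs: identify $\mathbb N^{n_l}_t$ with $\{\alpha\in\mathbb N^n_t:\mathrm{supp}(\alpha)\subseteq I_l\}$ by zero-padding. For a graph $G$ with nodes in $\mathbb N^n$ and Hermitian $g$, $\mathrm{supp}_g(G)=\{(\beta+\beta',\gamma+\gamma'):\ (\beta=\gamma\in V(G)\text{ or }\{\beta,\gamma\}\in E(G)),\ (\beta',\gamma')\in\mathrm{supp}(g)\}$. Let $\mathscr A_l=\{(\beta,\gamma)\in\mathscr A:\mathrm{supp}(\beta)\cup\mathrm{supp}(\gamma)\subseteq I_l\}$. Let $G^{(0)}_{d,l,0}$ be the graph on $\mathbb N^{n_l}_d$ with edges $\{\beta,\gamma\}$, $\beta\ne\gamma$, $(\beta,\gamma)\in\mathscr A_l$, and for $j\in J_l$ let $G^{(0)}_{d,l,j}$ be the graph on $\mathbb N^{n_l}_{d-d_j}$ with no edges. For $k\ge1$ let $\mathscr C^{(k-1)}_d=\bigcup_{l=1}^p\bigcup_{j\in\{0\}\cup J_l}\mathrm{supp}_{g_j}(G^{(k-1)}_{d,l,j})$; for $j\in\{0\}\cup J_l$, $F^{(k)}_{d,l,j}$ is the graph on $\mathbb N^{n_l}_{d-d_j}$ with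 edges $\{\beta,\gamma\}$, $\beta\ne\gamma$, such that $((\beta,\gamma)+\mathrm{supp}(g_j))\cap\mathscr C^{(k-1)}_d\ne\emptyset$, and $G^{(k)}_{d,l,j}=\overline{F^{(k)}_{d,l,j}}$. *)

From HB Require Import structures.
From mathcomp Require Import all_boot all_order all_algebra.
From mathcomp Require Import finmap.
From Stdlib Require Import Relations.
Set Implicit Arguments. Unset Strict Implicit. Unset Printing Implicit Defensive.
Import Order.TTheory GRing.Theory Num.Theory.


Definition mon (n : nat) := {ffun 'I_n -> nat}.
Definition mdeg n (a : mon n) : nat := \sum_(i < n) a i.
Definition madd n (a b : mon n) : mon n := [ffun i => a i + b i].
Definition mzero n : mon n := [ffun=> 0%N].
Definition msupp n (a : mon n) : {set 'I_n} := [set i | a i != 0%N].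

(* p = sum_{(beta,gamma)} p_{beta,gamma} z^beta conj(z)^gamma, represented by
   its finitely supported coefficient function (beta,gamma) |-> p_{beta,gamma} *)
Definition cpoly (C : numClosedFieldType) (n : nat) :=
  {fsfun (mon n * mon n)%type -> C with 0%R}.

Section Poly.
Variables (C : numClosedFieldType) (n : nat).
Definition psupp (p : cpoly C n) : {fset (mon n * mon n)} := finsupp p.
Definition pdeg (p : cpoly C n) : nat :=
  \max_(x <- psupp p) (mdeg x.1 + mdeg x.2).
Definition hermitian_poly (p : cpoly C n) : Prop :=
  forall b c : mon n, p (b, c) = ((p (c, b))^*)%R.
Definition pvar (p : cpoly C n) : {set 'I_n} :=
  [set i | has (fun x : mon n * mon n => (i \in msupp x.1) || (i \in msupp x.2))
                (psupp p)].
End Poly.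

Definition halfup (k : nat) : nat := uphalf k.

Record graph (T : Type) := Graph { gV : T -> Prop; gE : T -> T -> Prop }.

Section Graphs.
Variable T : eqType.
Definition graph_wf (G : graph T) : Prop :=
  (forall x y, gE G x y -> gE G y x) /\ (forall x, ~ gE G x x) /\
  (forall x y, gE G x y -> gV G x /\ gV G y).
Definition subgraph (G H : graph T) : Prop :=
  (forall x, gV G x -> gV H x) /\ (forall x y, gE G x y -> gE H x y).
Definition same_nodes (G H : graph T) : Prop := forall x, gV G x <-> gV H x.
Definition chordal (G : graph T) : Prop :=
  forall (k : nat) (c : nat -> T), (4 <= k)%N ->
    (forall i j, (i < k)%N -> (j < k)%N -> c i = c j -> i = j) ->
    (forall i, (i < k)%N -> gV G (c i)) ->
    (forall i, (i < k)%N -> gE G (c i) (c ((i.+1) %% k)%N)) ->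
    exists i j, [/\ (i < k)%N, (j < k)%N, i != j,
                    ((i.+1) %% k != j)%N && ((j.+1) %% k != i)%N & gE G (c i) (c j)].
Definition gconnected (G : graph T) (x y : T) : Prop := clos_refl_trans T (gE G) x y.
End Graphs.

Definition clique n (H : graph 'I_n) (S : {set 'I_n}) : Prop :=
  forall i j, i \in S -> j \in S -> i != j -> gE H i j.
Definition maxclique n (H : graph 'I_n) (S : {set 'I_n}) : Prop :=
  clique H S /\ forall S', clique H S' -> S \subset S' -> S' = S.

Definition chordal_ext_rule (T : eqType) (ext : graph T -> graph T) : Prop :=
  (forall G, graph_wf G ->
     [/\ graph_wf (ext G), same_nodes G (ext G), chordal (ext G) & subgraph G (ext G)]) /\
  (forall G H, graph_wf G -> graph_wf H -> subgraph G H -> subgraph (ext G) (ext H)).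
Definition ext_within_components (T : eqType) (ext : graph T -> graph T) : Prop :=
  forall G, graph_wf G -> forall x y, gE (ext G) x y -> gconnected G x y.

Section Problem.
Variables (C : numClosedFieldType) (n m : nat) (f : cpoly C n) (g : 'I_m -> cpoly C n).

Definition dj (j : 'I_m) : nat := halfup (pdeg (g j)).
Definition dmin : nat := maxn (halfup (pdeg f)) (\max_(j < m) dj j).
Definition inA (x : mon n * mon n) : Prop :=
  x \in psupp f \/ exists j, x \in psupp (g j).
Definition Jprime (d : nat) : {set 'I_m} := [set j | dj j == d].

Definition Gcsp (d : nat) : graph 'I_n :=
  Graph (fun _ => True) (fun i i' => i != i' /\
   ((exists x, (x \in psupp f \/ exists2 j, j \in Jprime d & x \in psupp (g j)) /\
        i \in msupp x.1 :|: msupp x.2 /\ i' \in msupp x.1 :|: msupp x.2) \/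
    (exists2 j, j \notin Jprime d & i \in pvar (g j) /\ i' \in pvar (g j)))).

Variables (p : nat) (I : 'I_p -> {set 'I_n}) (J : 'I_p -> {set 'I_m}) (d : nat).

(* N^{n_l}_t, identified with { alpha in N^n_t : supp alpha subset I_l } *)
Definition Nl (l : 'I_p) (t : nat) (a : mon n) : Prop :=
  (mdeg a <= t)%N /\ msupp a \subset I l.

(* indices j in {0} U J_l ; None stands for j = 0 (g_0 = 1, d_0 = 0) *)
Definition inJ0 (l : 'I_p) (j : option 'I_m) : Prop :=
  match j with None => True | Some j => j \in J l end.
Definition dO (j : option 'I_m) : nat := match j with None => 0%N | Some j => dj j end.
Definition suppO (j : option 'I_m) (x : mon n * mon n) : Prop :=
  match j with None => x = (mzero n, mzero n) | Some j => x \in psupp (g j) end.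

Definition suppg (sg : mon n * mon n -> Prop) (G : graph (mon n)) (x : mon n * mon n) : Prop :=
  exists b c y, ((b = c /\ gV G b) \/ gE G b c) /\ sg y /\ x = (madd b y.1, madd c y.2).

Definition inAl (l : 'I_p) (x : mon n * mon n) : Prop :=
  inA x /\ msupp x.1 :|: msupp x.2 \subset I l.

Definition G0 (l : 'I_p) (j : option 'I_m) : graph (mon n) :=
  match j with
  | None => Graph (Nl l d) (fun b c => [/\ Nl l d b, Nl l d c, b <> c &
                                        (inAl l (b, c) \/ inAl l (c, b))])
  | Some j => Graph (Nl l (d - dj j)) (fun _ _ => False)
  end.

Definition Cset (Gs : 'I_p -> option 'I_m -> graph (mon n)) (x : mon n * mon n) : Prop :=
  exists l j, inJ0 l j /\ suppg (suppO j) (Gs l j) x.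

Definition Fk (Cs : mon n * mon n -> Prop) (l : 'I_p) (j : option 'I_m) : graph (mon n) :=
  Graph (Nl l (d - dO j))
    (fun b c => [/\ Nl l (d - dO j) b, Nl l (d - dO j) c, b <> c &
       exists y, suppO j y /\ (Cs (madd b y.1, madd c y.2) \/ Cs (madd c y.1, madd b y.2))]).

Variable ext : graph (mon n) -> graph (mon n).

Fixpoint Gk (k : nat) : 'I_p -> option 'I_m -> graph (mon n) :=
  match k with
  | 0 => G0
  | k'.+1 => fun l j => ext (Fk (Cset (Gk k')) l j)
  end.
End Problem.

Definition sign_symmetry (n : nat) (inA : mon n * mon n -> Prop) (r : 'I_n -> bool) : Prop :=
  forall x, inA x -> ~~ odd (\sum_(i < n) r i * (x.1 i + x.2 i)).

From HB Require Import structures.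
From mathcomp Require Import all_boot all_order all_algebra.
From mathcomp Require Import finmap.
From Stdlib Require Import Relations.
Import Order.TTheory GRing.Theory Num.Theory.

Set Implicit Arguments.
Unset Strict Implicit.

(* For a sign vector r write [r]-parity of a multi-index a for
   r^T a mod 2.  A pair (beta, gamma) is balanced when beta and gamma have the
   same parity, i.e. r^T (beta + gamma) is even; a graph is parity preserving
   when both ends of every edge have the same parity.  Parity is additive, so
   shifting a parity-preserving edge by a balanced term yields a balanced term.
   This gives the induction on k:
   - G^(0) is parity preserving because its edges come from A, which is
     balanced by the sign symmetry r, and supp(g_0) = {(0,0)} is balanced;
   - if every G^(k-1) is parity preserving then C^(k-1) is balanced, hence
     every F^(k) is parity preserving; parity is then constant on connected
     components of F^(k), and the chordal extension only joins nodes of the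
     same component, so G^(k) is parity preserving. *)

Section Parity.
Variables (n : nat) (r : 'I_n -> bool).

Definition rparity (a : mon n) : bool := odd (\sum_(i < n) r i * a i).

Definition balanced (S : mon n * mon n -> Prop) : Prop :=
  forall x, S x -> rparity x.1 = rparity x.2.

Definition parity_preserving (G : graph (mon n)) : Prop :=
  forall b c, gE G b c -> rparity b = rparity c.

Lemma odd_rsum_add (b c : mon n) :
  odd (\sum_(i < n) r i * (b i + c i)) = rparity b (+) rparity c.
Proof.
rewrite /rparity -oddD -big_split /=; congr odd.
by apply: eq_bigr => i _; rewrite mulnDr.
Qed.

Lemma rparity_madd (b c : mon n) : rparity (madd b c) = rparity b (+) rparity c.
Proof. by rewrite -odd_rsum_add /rparity; congr odd; apply: eq_bigr => i _; rewrite ffunE. Qed.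

Lemma rparity_mzero : rparity (mzero n) = false.
Proof. by rewrite /rparity big1 // => i _; rewrite ffunE muln0. Qed.

Lemma sign_symmetry_balanced (S : mon n * mon n -> Prop) :
  sign_symmetry S r -> balanced S.
Proof.
move=> hS x /hS; rewrite odd_rsum_add.
by case: (rparity x.1); case: (rparity x.2).
Qed.

Lemma connected_rparity (G : graph (mon n)) :
  parity_preserving G -> forall b c, gconnected G b c -> rparity b = rparity c.
Proof.
move=> hG b c; elim=> [x y /hG | // | x y z _ exy _ eyz]; first by [].
by rewrite exy eyz.
Qed.

Lemma ext_parity_preserving (ext : graph (mon n) -> graph (mon n)) (G : graph (mon n)) :
  ext_within_components ext -> graph_wf G -> parity_preserving G ->
  parity_preserving (ext G).
Proof.
move=> hcomp hwf hG b c /(hcomp G hwf); exact: connected_rparity.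
Qed.

Lemma suppg_balanced (sg : mon n * mon n -> Prop) (G : graph (mon n)) :
  balanced sg -> parity_preserving G -> balanced (suppg sg G).
Proof.
move=> hsg hG x [b [c [y [hbc [/hsg hy ->]]]]] /=.
rewrite !rparity_madd hy.
by case: hbc => [[-> _] | /hG ->].
Qed.

End Parity.

Section Iteration.
Variables (C : numClosedFieldType) (n m : nat) (f : cpoly C n) (g : 'I_m -> cpoly C n).
Variables (p : nat) (I : 'I_p -> {set 'I_n}) (J : 'I_p -> {set 'I_m}) (d : nat).
Variables (r : 'I_n -> bool) (hA : balanced r (inA f g)).

Lemma suppO_balanced (j : option 'I_m) : balanced r (suppO g j).
Proof.
case: j => [j | ] y /= hy; first by apply: hA; right; exists j.
by rewrite hy rparity_mzero.
Qed.

(* The initial graphs G^(0) have their edges in A_l. *)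
Lemma G0_parity_preserving (l : 'I_p) (j : option 'I_m) :
  parity_preserving r (G0 f g I d l j).
Proof.
by case: j => [j | ] //= b c [_ _ _ [[/hA /= -> _] | [/hA /= <- _]]].
Qed.

Lemma Fk_wf (Cs : mon n * mon n -> Prop) (l : 'I_p) (j : option 'I_m) :
  graph_wf (Fk g I d Cs l j).
Proof.
split; [ | split].
- move=> b c [hb hc hne [y [hy hC]]]; split=> //; first by auto.
  by exists y; split=> //; case: hC; auto.
- by move=> b [_ _ ].
- by move=> b c [].
Qed.

(* If C^(k-1) is balanced then every F^(k) preserves parity: an edge
   {b, c} is witnessed by a balanced shift (b, c) + y landing in C^(k-1). *)
Lemma Fk_parity_preserving (Cs : mon n * mon n -> Prop) (l : 'I_p) (j : option 'I_m) :
  balanced r Cs -> parity_preserving r (Fk g I d Cs l j).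
Proof.
move=> hC b c [_ _ _ [y [/suppO_balanced hy hCs]]].
by case: hCs => /hC /=; rewrite !rparity_madd hy;
  case: (rparity r b); case: (rparity r c); case: (rparity r y.2).
Qed.

Variables (ext : graph (mon n) -> graph (mon n)) (hcomp : ext_within_components ext).

Lemma Gk_parity_preserving (k : nat) (l : 'I_p) (j : option 'I_m) :
  parity_preserving r (Gk f g I J d ext k l j).
Proof.
elim: k l j => [ | k IH] l j; first exact: G0_parity_preserving.
have hC : balanced r (Cset g J (Gk f g I J d ext k)).
  move=> x [l' [j' [_ hx]]].
  exact: (suppg_balanced (suppO_balanced (j := j')) (IH l' j') hx).
exact: ext_parity_preserving hcomp (Fk_wf _ _ _) (Fk_parity_preserving hC).
Qed.

End Iteration.

Theorem mainTheorem8
  (C : numClosedFieldType) (n m : nat) (f : cpoly C n) (g : 'I_m -> cpoly C n)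
  (hf : hermitian_poly f) (hg : forall j, hermitian_poly (g j))
  (r : 'I_n -> bool) (hr : sign_symmetry (inA f g) r)
  (ext : graph (mon n) -> graph (mon n))
  (hext : chordal_ext_rule ext) (hcomp : ext_within_components ext)
  (d : nat) (hd : (dmin f g <= d)%N)
  (H : graph 'I_n) (hHV : forall i, gV H i) (hHwf : graph_wf H) (hHch : chordal H)
  (hHsub : subgraph (Gcsp f g d) H)
  (p : nat) (I : 'I_p -> {set 'I_n}) (hIinj : injective I)
  (hImax : forall l, maxclique H (I l))
  (hIall : forall S, maxclique H S -> exists l, I l = S)
  (J : 'I_p -> {set 'I_m})
  (hJdisj : forall l l', l != l' -> [disjoint J l & J l'])
  (hJcov : \bigcup_(l < p) J l = ~: Jprime g d)
  (hJvar : forall l j, j \in J l -> pvar (g j) \subset I l)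
  (k : nat) (hk : (1 <= k)%N) :
  forall (l : 'I_p) (j : 'I_m), j \in J l ->
  forall b c : mon n, Nl I l (d - dj g j) b -> Nl I l (d - dj g j) c ->
    gE (Gk f g I J d ext k l (Some j)) b c ->
    ~~ odd (\sum_(i < n) r i * (b i + c i)).
Proof.
move=> l j _ b c _ _ hbc.
have hA := sign_symmetry_balanced hr.
rewrite odd_rsum_add (Gk_parity_preserving hA hcomp hbc).
by case: (rparity r c).
Qed.
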